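(* Let $a_1,a_2,a_3$ be assemblies of connected graphs on the same finite vertex set such that the components of $a_1$ and of $a_2$ are regular graphs. If $a_1$ divides $a_2$ and $a_2$ divides $a_3$, then $a_1$ divides $a_3$ and $\phi_{(a_2,a_3/a_2)}(x,t)$ divides $\phi_{(a_1,a_3/a_1)}(x,t)$ in $\mathbb R[x,t]$.
   Context: All graphs finite and simple. Identify a graph on a finite set $V$ with the assembly of its connected components. $a_1$ divides $a_2$ if there is a graph $h$ whose vertex set is the set of vertex sets $B_1,\dots,B_k$ of the components of $a_1$ with $E(a_2)=E(a_1)\cup\{\{x,y\}:x\in B,y\in B',\{B,B'\}\in E(h)\}$; then $a_2/a_1:=h$. For an assembly $a$ of regular graphs $g_1,\dots,g_k$ on blocks $B_j$ with $n_j=|B_j|$, regularities $r_j$, and a graph $h$ on $\{B_1,\dots,B_k\}$, let $N_j=\sum_{s:\{B_s,B_j\}\in E(h)}n_s$; $A(a,h)$ is the $k\times k$ matrix with diagonal $r_j$ and $(i,j)$ entry ($i\neq j$) $\sqrt{n_in_j}$ if $\{B_i,B_j\}\in E(h)$, else $0$; $D(a,h)=\mathrm{diag}(r_j+N_j)$; and $\phi_{(a,h)}(x,t)=\det\big(xI_k-(A(a,h)-tD(a,h))\big)$. *)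

From HB Require Import structures.
From mathcomp Require Import all_boot all_order all_algebra.
From mathcomp Require Import reals.
Set Implicit Arguments. Unset Strict Implicit. Unset Printing Implicit Defensive.
Import Order.TTheory GRing.Theory Num.Theory.
Local Open Scope ring_scope.

(* A (finite simple) graph on the finite vertex set T is a symmetric,
   irreflexive boolean adjacency relation. A graph is identified with the
   assembly of its connected components. *)
Definition simple_graph (T : finType) (g : rel T) : Prop :=
  (forall x y, g x y = g y x) /\ (forall x, ~~ g x x).

Definition blocks (T : finType) (g : rel T) : {set {set T}} :=
  [set [set y | connect g x y] | x : T].

Definition deg (T : finType) (g : rel T) (x : T) : nat := #|[set y | g x y]|.

Definition regular_components (T : finType) (g : rel T) : Prop :=
  forall x y, connect g x y -> deg g x = deg g y.

(* h (a graph on the blocks of a1) is the quotient a2/a1 *)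
Definition is_quot (T : finType) (a1 a2 : rel T) (h : rel {set T}) : Prop :=
  [/\ (forall B B', B \in blocks a1 -> B' \in blocks a1 -> h B B' = h B' B),
      (forall B, B \in blocks a1 -> ~~ h B B) &
      (forall x y, a2 x y =
         a1 x y || [exists B in blocks a1, exists B' in blocks a1,
                     [&& x \in B, y \in B' & h B B']])].

Definition divides (T : finType) (a1 a2 : rel T) : Prop :=
  exists h : rel {set T}, is_quot a1 a2 h.

Definition blk (T : finType) (a : rel T) (i : 'I_#|blocks a|) : {set T} :=
  enum_val i.
Arguments blk {T} a i.

Definition bdeg (T : finType) (a : rel T) (B : {set T}) : nat :=
  if [pick x in B] is Some x then deg a x else 0.

Definition Nsum (T : finType) (a : rel T) (h : rel {set T})
    (j : 'I_#|blocks a|) : nat :=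
  \sum_(s < #|blocks a| | h (blk a s) (blk a j)) #|blk a s|.
Arguments Nsum {T} a h j.

Definition Amx (R : realType) (T : finType) (a : rel T) (h : rel {set T})
  : 'M[R]_#|blocks a| :=
  \matrix_(i, j)
    if i == j then (bdeg a (blk a i))%:R
    else if h (blk a i) (blk a j) then Num.sqrt ((#|blk a i| * #|blk a j|)%N%:R)
    else 0.

Arguments Amx R {T} a h.

Definition Dmx (R : realType) (T : finType) (a : rel T) (h : rel {set T})
  : 'M[R]_#|blocks a| :=
  \matrix_(i, j) if i == j then (bdeg a (blk a i) + Nsum a h j)%N%:R else 0.

Arguments Dmx R {T} a h.

(* phi_(a,h)(x,t) = det(x I - (A - t D)) in R[t][x] = R[x,t]:
   x is the outer variable 'X, t is the inner variable ('X)%:P. *)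
Definition phi (R : realType) (T : finType) (a : rel T) (h : rel {set T})
  : {poly {poly R}} :=
  \det (\matrix_(i, j)
     ((i == j)%:R * 'X
      - ((Amx R a h i j)%:P)%:P + ('X)%:P * ((Dmx R a h i j)%:P)%:P)).

Definition pdivides (R : realType) (p q : {poly {poly R}}) : Prop :=
  exists r : {poly {poly R}}, q = r * p.

(* Divisibility composes because a3 looks the same between any two components
   of a1: inside a component of a2 it coincides with a2, which is uniform between
   a1-components since a1 | a2, and across components of a2 it is uniform since
   a2 | a3.

   For the polynomials, phi_(a,h) is the characteristic polynomial of A - tD over
   R[t]. Let n_i and N_c be the sizes of the components of a1 and a2, and let K be
   the matrix with K_(c,i) = sqrt(n_i / N_c) when the i-th component of a1 lies in
   the c-th component of a2, and 0 otherwise. Its rows are orthonormal, and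
   counting neighbours with the regularity of a1 and a2 gives K A1 = A2 K and
   K D1 = D2 K. A constant intertwiner of full row rank makes A2 - tD2 a diagonal
   block of a triangular form of A1 - tD1, whence the divisibility. *)

From mathcomp Require Import all_boot all_order all_algebra.
From mathcomp Require Import reals.
From mathcomp Require Import ring.
Set Implicit Arguments. Unset Strict Implicit. Unset Printing Implicit Defensive.
Import Order.TTheory GRing.Theory Num.Theory.

Lemma card_in_const (T : finType) (B : {set T}) (P : pred T) (c : bool) :
  {in B, forall y, P y = c} -> #|[set y in B | P y]| = if c then #|B| else 0%N.
Proof.
move=> PB; have -> : [set y in B | P y] = if c then B else set0.
  apply/setP => y; rewrite inE.
  by case yB: (y \in B); rewrite /= ?PB; case: c {PB}; rewrite ?inE ?yB.
by case: c {PB}; rewrite ?cards0.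
Qed.

Section Components.
Variables (T : finType) (a : rel T).

Definition component x := [set y | connect a x y].

Lemma component_in_blocks x : component x \in blocks a.
Proof. by apply/imsetP; exists x. Qed.

Lemma mem_component x : x \in component x.
Proof. by rewrite inE connect0. Qed.

Hypothesis sym_a : symmetric a.
Let sym_connect : connect_sym a := sym_connect_sym sym_a.

Lemma eq_component x y : (component x == component y) = connect a x y.
Proof.
apply/eqP/idP => [eq_xy|cxy]; first by have := mem_component y; rewrite -eq_xy inE.
apply/setP => z; rewrite !inE; apply/idP/idP; last exact: connect_trans.
by apply: connect_trans; rewrite sym_connect.
Qed.

Lemma blocks_component B x : B \in blocks a -> x \in B -> B = component x.
Proof. by case/imsetP => z _ -> xz; apply/eqP; rewrite eq_component; rewrite inE in xz. Qed.

Lemma component_eq_block B x : B \in blocks a -> (component x == B) = (x \in B).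
Proof.
move=> Bb; apply/eqP/idP => [<-|xB]; first exact: mem_component.
by rewrite (blocks_component Bb xB).
Qed.

Lemma card_by_blocks (P : pred T) :
  #|[set y | P y]| = (\sum_(B in blocks a) #|[set y in B | P y]|)%N.
Proof.
rewrite -sum1_card (partition_big component (mem (blocks a))) /=; last first.
  by move=> y _; exact: component_in_blocks.
apply: eq_bigr => B Bb; rewrite -sum1_card; apply: eq_bigl => y.
by rewrite !inE component_eq_block // andbC.
Qed.

Lemma closed_block_sub (C : {set T}) B y : closed a C -> B \in blocks a -> y \in B ->
  (B \subset C) = (y \in C).
Proof.
move=> clC Bb yB; apply/subsetP/idP => [sBC|yC z]; first exact: sBC.
by rewrite (blocks_component Bb yB) inE => /(closed_connect clC) <-.
Qed.

Lemma card_closed (C : {set T}) : closed a C ->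
  #|C| = (\sum_(B in blocks a | B \subset C) #|B|)%N.
Proof.
move=> clC; have -> : #|C| = #|[set y | y \in C]| by apply: eq_card => y; rewrite inE.
rewrite card_by_blocks big_mkcondr; apply: eq_bigr => B Bb.
by apply: card_in_const => y yB; rewrite (closed_block_sub clC Bb yB).
Qed.

End Components.

Section Quotients.
Variables (T : finType) (a b : rel T) (h : rel {set T}).
Hypothesis quot_ab : is_quot a b h.

Lemma quot_sub x y : a x y -> b x y.
Proof. by case: quot_ab => _ _ ->; move->. Qed.

Lemma quot_connect {x y} : connect a x y -> connect b x y.
Proof. by apply: connect_sub => u v /quot_sub /connect1. Qed.

Lemma quot_sym B B' : B \in blocks a -> B' \in blocks a -> h B B' = h B' B.
Proof. by case: quot_ab => + _ _; apply. Qed.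

Lemma quot_irr B : B \in blocks a -> h B B = false.
Proof. by case: quot_ab => _ + _ => /[apply] /negbTE. Qed.

Hypothesis sym_a : symmetric a.

Lemma closed_quot_component x : closed a (component b x).
Proof.
apply: (intro_closed (sym_connect_sym sym_a)) => y z /quot_sub byz.
by rewrite !inE => cxy; apply: connect_trans cxy (connect1 byz).
Qed.

Lemma quot_in x y : connect a x y -> b x y = a x y.
Proof.
case: quot_ab => _ _ -> cxy; case: (a x y) => //=; apply/negbTE/negP.
case/existsP => B /andP[Bb /existsP[B' /andP[B'b /and3P[xB yB' hBB']]]].
have /eqP exy : component a x == component a y by rewrite eq_component.
move: hBB'; rewrite (blocks_component sym_a Bb xB) (blocks_component sym_a B'b yB').
by rewrite exy quot_irr // component_in_blocks.
Qed.

Lemma quot_out x y : ~~ connect a x y -> b x y = h (component a x) (component a y).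
Proof.
case: quot_ab => _ _ -> ncxy.
have -> /= : a x y = false by apply: contraNF ncxy => /connect1.
apply/existsP/idP => [|hxy].
  case=> B /andP[Bb /existsP[B' /andP[B'b /and3P[xB yB' hBB']]]].
  by rewrite -(blocks_component sym_a Bb xB) -(blocks_component sym_a B'b yB').
exists (component a x); rewrite component_in_blocks /=; apply/existsP.
by exists (component a y); rewrite component_in_blocks !mem_component.
Qed.

Lemma quot_congr x x' y y' : connect a x x' -> connect a y y' ->
  ~~ connect a x y -> b x y = b x' y'.
Proof.
move=> cxx' cyy' ncxy; have sym_connect := sym_connect_sym sym_a.
have ncxy' : ~~ connect a x' y'.
  apply: contra ncxy => cxy'; apply: connect_trans cxx' _.
  by apply: connect_trans cxy' _; rewrite sym_connect.
have /eqP ex : component a x == component a x' by rewrite eq_component.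
have /eqP ey : component a y == component a y' by rewrite eq_component.
by rewrite (quot_out ncxy) (quot_out ncxy') ex ey.
Qed.

Lemma card_quot_nbhd (C : {set T}) x : closed a C -> x \in C ->
  #|[set y in C | b x y]| =
  (deg a x + \sum_(B in blocks a | (B \subset C) && h (component a x) B) #|B|)%N.
Proof.
move=> clC xC; rewrite (card_by_blocks sym_a (fun y => (y \in C) && b x y)).
rewrite (bigD1 (component a x)) ?component_in_blocks //=; congr (_ + _)%N.
  apply: eq_card => y; rewrite !inE; apply/idP/idP => [/and3P[cxy _]|axy].
    by rewrite quot_in.
  have cxy := connect1 axy.
  by rewrite cxy -(closed_connect clC cxy) xC quot_in.
rewrite [RHS]big_mkcondr [RHS](bigD1 (component a x)) ?component_in_blocks //=.
rewrite quot_irr ?component_in_blocks // andbF add0n.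
apply: eq_bigr => B /andP[Bb neB]; apply: card_in_const => y yB.
have eB := blocks_component sym_a Bb yB.
have ncxy : ~~ connect a x y by rewrite -(eq_component sym_a) -eB eq_sym.
by rewrite (quot_out ncxy) -eB (closed_block_sub sym_a clC Bb yB).
Qed.

End Quotients.


Lemma divides_of_congr (T : finType) (a b : rel T) :
  symmetric a -> symmetric b ->
  (forall x y, connect a x y -> b x y = a x y) ->
  (forall x x' y y', connect a x x' -> connect a y y' ->
     ~~ connect a x y -> b x y = b x' y') ->
  divides a b.
Proof.
move=> sym_a sym_b b_in b_congr.
exists (fun B B' : {set T} => (B != B') && [exists x in B, exists y in B', b x y]); split.
- move=> B B' _ _; rewrite eq_sym; congr (_ && _).
  by apply/existsP/existsP => -[x /andP[xB /existsP[y /andP[yB' bxy]]]];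
    exists y; rewrite yB' /=; apply/existsP; exists x; rewrite xB sym_b.
- by move=> B _; rewrite eqxx.
move=> x y; have [cxy|ncxy] := boolP (connect a x y).
  rewrite b_in //; case: (a x y) => //=; apply/esym/negbTE/negP.
  case/existsP => B /andP[Bb /existsP[B' /andP[B'b /and4P[xB yB' neBB' _]]]].
  move: neBB'; rewrite (blocks_component sym_a Bb xB) (blocks_component sym_a B'b yB').
  by rewrite eq_component // cxy.
have -> /= : a x y = false by apply: contraNF ncxy => /connect1.
apply/idP/existsP => [bxy|[B /andP[Bb /existsP[B' /andP[B'b /and4P[xB yB' _]]]]]].
  exists (component a x); rewrite component_in_blocks mem_component /=.
  apply/existsP; exists (component a y); rewrite component_in_blocks mem_component.
  rewrite eq_component // ncxy /=; apply/existsP; exists x; rewrite mem_component.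
  by apply/existsP; exists y; rewrite mem_component.
case/existsP => x' /andP[xx' /existsP[y' /andP[yy' bx'y']]].
move: xx' yy'; rewrite (blocks_component sym_a Bb xB) (blocks_component sym_a B'b yB').
by rewrite !inE => cxx' cyy'; rewrite (b_congr x x' y y').
Qed.

Lemma divides_trans (T : finType) (a1 a2 a3 : rel T) :
  symmetric a1 -> symmetric a2 -> symmetric a3 ->
  divides a1 a2 -> divides a2 a3 -> divides a1 a3.
Proof.
move=> sym1 sym2 sym3 [h12 q12] [h23 q23]; apply: divides_of_congr => //.
  move=> x y c1xy; have c2xy := quot_connect q12 c1xy.
  by rewrite (quot_in q23 sym2 c2xy) (quot_in q12 sym1 c1xy).
move=> x x' y y' cxx' cyy' nc1xy; have [c2xy|nc2xy] := boolP (connect a2 x y).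
  have c2x'y' : connect a2 x' y'.
    apply: connect_trans (connect_trans _ c2xy) (quot_connect q12 cyy').
    by rewrite (sym_connect_sym sym2) (quot_connect q12 cxx').
  rewrite (quot_in q23 sym2 c2xy) (quot_in q23 sym2 c2x'y').
  exact: (quot_congr q12 sym1 cxx' cyy' nc1xy).
exact: (quot_congr q23 sym2 (quot_connect q12 cxx') (quot_connect q12 cyy') nc2xy).
Qed.

Section BlockEnumeration.
Variables (T : finType) (a : rel T).

Lemma blk_in_blocks i : blk a i \in blocks a.
Proof. exact: enum_valP. Qed.

Lemma blk_neq0 i : blk a i != set0.
Proof.
by case/imsetP: (blk_in_blocks i) => z _ ->; apply/set0Pn; exists z; rewrite inE.
Qed.

Lemma card_blk_gt0 i : (0 < #|blk a i|)%N.
Proof. by rewrite card_gt0 blk_neq0. Qed.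

Lemma sum_blk (P : pred {set T}) (F : {set T} -> nat) :
  (\sum_(i < #|blocks a| | P (blk a i)) F (blk a i) = \sum_(B in blocks a | P B) F B)%N.
Proof. by rewrite (big_enum_val_cond (A := pred_of_set (blocks a))). Qed.

Lemma blk_onto x : exists i, blk a i = component a x.
Proof.
exists (enum_rank_in (component_in_blocks a x) (component a x)).
by rewrite /blk enum_rankK_in // component_in_blocks.
Qed.

Hypothesis sym_a : symmetric a.

Lemma blk_component i x : x \in blk a i -> blk a i = component a x.
Proof. exact: blocks_component (blk_in_blocks i). Qed.

Lemma blk_connect i j x y : x \in blk a i -> y \in blk a j -> connect a x y -> i = j.
Proof.
move=> xBi yBj cxy; apply: enum_val_inj; rewrite -/(blk a i) -/(blk a j).
by rewrite (blk_component xBi) (blk_component yBj); apply/eqP; rewrite eq_component.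
Qed.

Lemma bdeg_blk i x : regular_components a -> x \in blk a i ->
  bdeg a (blk a i) = deg a x.
Proof.
move=> reg xB; rewrite /bdeg; case: pickP => [x0 x0B|]; last by move/(_ x); rewrite xB.
by apply: reg; move: x0B; rewrite (blk_component xB) inE (sym_connect_sym sym_a).
Qed.

End BlockEnumeration.

Section QuotientDegrees.
Variables (T : finType) (a b : rel T) (h : rel {set T}).
Hypotheses (quot_ab : is_quot a b h) (sym_a : symmetric a).

Lemma deg_quot x :
  deg b x = (deg a x + \sum_(B in blocks a | h (component a x) B) #|B|)%N.
Proof.
have -> : deg b x = #|[set y in [set: T] | b x y]| by apply: eq_card => y; rewrite !inE.
rewrite (card_quot_nbhd quot_ab sym_a _ (in_setT x)); last by move=> ? ?; rewrite !inE.
by under eq_bigl do rewrite subsetT.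
Qed.

Lemma bdeg_add_Nsum i x : regular_components a -> x \in blk a i ->
  (bdeg a (blk a i) + Nsum a h i)%N = deg b x.
Proof.
move=> reg xB; rewrite (bdeg_blk sym_a reg xB) deg_quot -(blk_component sym_a xB).
rewrite /Nsum (sum_blk a (h^~ (blk a i)) (fun B => #|B|)); congr (_ + _)%N.
apply: eq_bigl => B; case Bb: (B \in blocks a) => //=.
by rewrite (quot_sym quot_ab) ?blk_in_blocks.
Qed.

End QuotientDegrees.

Section QuotientTower.
Variables (T : finType) (a1 a2 a3 : rel T) (h12 h13 h23 : rel {set T}).
Hypotheses (sym1 : symmetric a1) (sym2 : symmetric a2).
Hypotheses (q12 : is_quot a1 a2 h12) (q13 : is_quot a1 a3 h13) (q23 : is_quot a2 a3 h23).

Lemma deg_quot_component x :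
  deg a2 x = (deg a1 x + \sum_(B in blocks a1 |
     (B \subset component a2 x) && h13 (component a1 x) B) #|B|)%N.
Proof.
have closed2 := closed_quot_component q12 sym1 x.
rewrite -(card_quot_nbhd q13 sym1 closed2 (mem_component a2 x)).
apply: eq_card => y; rewrite !inE; apply/idP/andP => [a2xy|[cxy]].
  by have cxy := connect1 a2xy; rewrite cxy (quot_in q23 sym2 cxy).
by rewrite (quot_in q23 sym2 cxy).
Qed.

Lemma quot_component_compat x y : ~~ connect a2 x y ->
  h13 (component a1 x) (component a1 y) = h23 (component a2 x) (component a2 y).
Proof.
move=> nc2xy; have nc1xy : ~~ connect a1 x y by apply: contra nc2xy => /(quot_connect q12).
by rewrite -(quot_out q13 sym1 nc1xy) -(quot_out q23 sym2 nc2xy).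
Qed.

End QuotientTower.

Section CharPoly.
Local Open Scope ring_scope.

Lemma char_poly_conj (R : comNzRingType) n (M Q Q' : 'M[R]_n) :
  Q *m Q' = 1%:M -> Q' *m Q = 1%:M -> char_poly (Q *m M *m Q') = char_poly M.
Proof.
move=> QQ' Q'Q; rewrite /char_poly.
have -> : char_poly_mx (Q *m M *m Q') =
    map_mx polyC Q *m char_poly_mx M *m map_mx polyC Q'.
  rewrite /char_poly_mx mulmxBr mulmxBl -!map_mxM; congr (_ - _).
  by rewrite mul_mx_scalar -scalemxAl -map_mxM QQ' map_mx1 scalemx1.
rewrite !det_mulmx mulrC mulrA -det_mulmx -map_mxM Q'Q.
by rewrite map_mx1 det1 mul1r.
Qed.

Lemma char_poly_lblock (R : comNzRingType) m p (A : 'M[R]_m) (X : 'M[R]_(p, m)) Y :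
  char_poly (block_mx A 0 X Y) = char_poly A * char_poly Y.
Proof.
rewrite /char_poly /char_poly_mx map_block_mx scalar_mx_block.
by rewrite opp_block_mx add_block_mx map_mx0 oppr0 addr0 det_lblock.
Qed.

Lemma row_free_col_mx_unit (F : fieldType) m p (K : 'M[F]_(m, m + p)) :
  row_free K -> exists W : 'M[F]_(p, m + p), col_mx K W \in unitmx.
Proof.
move=> freeK; set U := row_ebase K; set L := col_ebase K.
have eqK : K = L *m usubmx U.
  rewrite -{1}(mulmx_ebase K) (eqP freeK) -/U -/L pid_mx_row -mulmxA.
  by rewrite -{1}(vsubmxK U) mul_row_col mul1mx mul0mx addr0.
exists (dsubmx U).
have -> : col_mx K (dsubmx U) = block_mx L 0 0 1%:M *m U.
  by rewrite -{2}(vsubmxK U) mul_block_col mul0mx addr0 mul0mx add0r mul1mx eqK.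
rewrite unitmx_mul row_ebase_unit andbT unitmxE det_ublock det1 mulr1 -unitmxE.
exact: col_ebase_unit.
Qed.

Lemma row_free_rinv (F : fieldType) m n (K : 'M[F]_(m, n)) (L : 'M[F]_(n, m)) :
  K *m L = 1%:M -> row_free K.
Proof.
move=> KL; rewrite /row_free eqn_leq rank_leq_row /=.
by rewrite -{1}(mxrank1 F m) -KL mxrankM_maxl.
Qed.

Lemma char_poly_dvd_intertwine (F : fieldType) n m (M1 : 'M[{poly F}]_n)
    (M2 : 'M[{poly F}]_m) (K : 'M[F]_(m, n)) :
  row_free K -> map_mx polyC K *m M1 = M2 *m map_mx polyC K ->
  exists r, char_poly M1 = r * char_poly M2.
Proof.
move=> freeK; have le_mn : (m <= n)%N by rewrite -(eqP freeK) rank_leq_col.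
move: (n - m)%N (subnKC le_mn) => p eq_n; subst n => eqKM.
have [W unitQ] := row_free_col_mx_unit freeK.
set Q := map_mx polyC (col_mx K W); set Q' := map_mx polyC (invmx (col_mx K W)).
have QQ' : Q *m Q' = 1%:M by rewrite -map_mxM mulmxV // map_mx1.
have Q'Q : Q' *m Q = 1%:M by rewrite -map_mxM mulVmx // map_mx1.
have KQ' : map_mx polyC K *m Q' = row_mx 1%:M 0.
  have -> : map_mx polyC K = row_mx 1%:M 0 *m Q.
    by rewrite /Q map_col_mx mul_row_col mul1mx mul0mx addr0.
  by rewrite -mulmxA QQ' mulmx1.
set Z := map_mx polyC W *m M1 *m Q'.
have eqQM : Q *m M1 *m Q' = block_mx M2 0 (lsubmx Z) (rsubmx Z).
  rewrite /Q map_col_mx mul_col_mx mul_col_mx eqKM -mulmxA KQ' -/Z.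
  by rewrite mul_mx_row mulmx1 mulmx0 -[Z in col_mx _ Z]hsubmxK.
exists (char_poly (rsubmx Z)).
by rewrite -(char_poly_conj M1 QQ' Q'Q) eqQM char_poly_lblock mulrC.
Qed.

Lemma phi_char_poly (R : realType) (T : finType) (a : rel T) (h : rel {set T}) :
  phi R a h = char_poly (map_mx polyC (Amx R a h) - 'X *: map_mx polyC (Dmx R a h)).
Proof.
rewrite /phi /char_poly /char_poly_mx; congr (\det _); apply/matrixP => i j.
rewrite !mxE rmorphB /= rmorphM /= mulr_natl opprB addrC.
by rewrite rmorphM /=; ring.
Qed.

End CharPoly.

Section Sqrtn.
Local Open Scope ring_scope.
Variable R : rcfType.

Definition sqrtn (n : nat) : R := Num.sqrt n%:R.

Lemma sqrtn_mul_self n : sqrtn n * sqrtn n = n%:R.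
Proof. by rewrite -expr2 sqr_sqrtr ?ler0n. Qed.

Lemma sqrtnM m n : sqrtn (m * n) = sqrtn m * sqrtn n.
Proof. by rewrite /sqrtn natrM sqrtrM ?ler0n. Qed.

Lemma sqrtn_neq0 n : (0 < n)%N -> sqrtn n != 0.
Proof. by move=> n_gt0; rewrite sqrtr_eq0 -ltNge ltr0n. Qed.

End Sqrtn.

Section BlockIncidence.
Local Open Scope ring_scope.
Variables (R : realType) (T : finType) (a1 a2 a3 : rel T) (h12 h13 h23 : rel {set T}).
Hypotheses (sym1 : symmetric a1) (sym2 : symmetric a2).
Hypotheses (reg1 : regular_components a1) (reg2 : regular_components a2).
Hypotheses (q12 : is_quot a1 a2 h12) (q13 : is_quot a1 a3 h13) (q23 : is_quot a2 a3 h23).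

Local Notation B1 := (blk a1).
Local Notation B2 := (blk a2).

Lemma blk_sub_blk i c x : x \in B1 i -> (B1 i \subset B2 c) = (x \in B2 c).
Proof.
move=> xBi; apply/subsetP/idP => [sub_ic|xBc]; first exact: sub_ic.
move=> z; rewrite (blk_component sym1 xBi) (blk_component sym2 xBc) !inE.
exact: (quot_connect q12).
Qed.

Lemma blk_sub_blk_uniq i c d : B1 i \subset B2 c -> B1 i \subset B2 d -> c = d.
Proof.
have /set0Pn[x xBi] := blk_neq0 i; rewrite !(blk_sub_blk _ xBi) => xBc xBd.
exact: (blk_connect sym2 xBc xBd (connect0 a2 x)).
Qed.

Lemma sum_card_blk_sub c :
  (\sum_(i < #|blocks a1| | B1 i \subset B2 c) #|B1 i|)%N = #|B2 c|.
Proof.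
have /set0Pn[x xBc] := blk_neq0 c.
rewrite (sum_blk a1 (fun B => B \subset B2 c) (fun B => #|B|)) (blk_component sym2 xBc).
by rewrite (card_closed sym1 (closed_quot_component q12 sym1 x)).
Qed.

Lemma bdeg_blk_quot j d : B1 j \subset B2 d ->
  (bdeg a1 (B1 j) + \sum_(i < #|blocks a1| | (B1 i \subset B2 d) && h13 (B1 i) (B1 j))
     #|B1 i|)%N = bdeg a2 (B2 d).
Proof.
have /set0Pn[x xBj] := blk_neq0 j; rewrite (blk_sub_blk _ xBj) => xBd.
rewrite (bdeg_blk sym1 reg1 xBj) (bdeg_blk sym2 reg2 xBd).
rewrite (deg_quot_component sym1 sym2 q12 q13 q23) -(blk_component sym2 xBd).
rewrite (sum_blk a1 (fun B => (B \subset B2 d) && h13 B (B1 j)) (fun B => #|B|)).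
congr (_ + _)%N; apply: eq_bigl => B; case Bb: (B \in blocks a1) => //=.
by rewrite (quot_sym q13 Bb (blk_in_blocks j)) (blk_component sym1 xBj).
Qed.

Lemma quot_blk_compat i j c d : B1 i \subset B2 c -> B1 j \subset B2 d -> c != d ->
  h13 (B1 i) (B1 j) = h23 (B2 c) (B2 d).
Proof.
have /set0Pn[x xBi] := blk_neq0 i; have /set0Pn[y yBj] := blk_neq0 j.
rewrite (blk_sub_blk _ xBi) (blk_sub_blk _ yBj) => xBc yBd neq_cd.
have nc2xy : ~~ connect a2 x y by apply: contra neq_cd => /(blk_connect sym2 xBc yBd) ->.
rewrite (blk_component sym1 xBi) (blk_component sym1 yBj).
rewrite (blk_component sym2 xBc) (blk_component sym2 yBd).
exact: (quot_component_compat sym1 sym2 q12 q13 q23 nc2xy).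
Qed.

Definition incid_mx : 'M[R]_(#|blocks a2|, #|blocks a1|) :=
  \matrix_(c, i) if B1 i \subset B2 c then sqrtn R #|B1 i| / sqrtn R #|B2 c| else 0.

Lemma incid_mx_mulmx_tr : incid_mx *m incid_mx^T = 1%:M.
Proof.
apply/matrixP => c d; rewrite !mxE.
transitivity (\sum_i (if (B1 i \subset B2 c) && (c == d)
                      then (#|B1 i|%:R : R) / #|B2 c|%:R else 0)).
  apply: eq_bigr => i _; rewrite !mxE.
  case: ifP => ic; case: ifP => id /=; rewrite ?mul0r ?mulr0 //.
    by rewrite (blk_sub_blk_uniq ic id) eqxx mulf_div !sqrtn_mul_self.
  by case: eqP => // eq_cd; rewrite eq_cd id in ic.
rewrite -big_mkcond /=; case: (eqVneq c d) => [->|ne]; last first.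
  by rewrite big_pred0 // => i; rewrite andbF.
under eq_bigl do rewrite andbT.
by rewrite -mulr_suml -natr_sum sum_card_blk_sub mulfV // pnatr_eq0 -lt0n card_blk_gt0.
Qed.

Lemma incid_mxD : incid_mx *m Dmx R a1 h13 = Dmx R a2 h23 *m incid_mx.
Proof.
apply/matrixP => c j; rewrite !mxE (bigD1 j) //= big1 ?addr0; last first.
  by move=> i /negbTE ne; rewrite !mxE ne mulr0.
rewrite [RHS](bigD1 c) //= [X in _ = _ + X]big1 ?addr0; last first.
  by move=> e /negbTE ne; rewrite !mxE eq_sym ne mul0r.
rewrite !mxE !eqxx; case: ifP => jc; last by rewrite mul0r mulr0.
have /set0Pn[x xBj] := blk_neq0 j; have xBc : x \in B2 c by rewrite -(blk_sub_blk _ xBj).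
by rewrite (bdeg_add_Nsum q13 sym1 reg1 xBj) (bdeg_add_Nsum q23 sym2 reg2 xBc) mulrC.
Qed.

Lemma incid_Amx_entry c j : (incid_mx *m Amx R a1 h13) c j =
  sqrtn R #|B1 j| / sqrtn R #|B2 c| *
   ((B1 j \subset B2 c)%:R * (bdeg a1 (B1 j))%:R +
    \sum_(i | (B1 i \subset B2 c) && h13 (B1 i) (B1 j)) (#|B1 i|%:R : R)).
Proof.
rewrite mxE (bigD1 j) //= mulrDr; congr (_ + _).
  by rewrite !mxE eqxx; case: ifP => _; rewrite ?mul1r ?mul0r ?mulr0.
rewrite mulr_sumr [RHS]big_mkcond [RHS](bigD1 j) //= (quot_irr q13 (blk_in_blocks j)).
rewrite andbF add0r; apply: eq_bigr => i ne; rewrite !mxE (negbTE ne).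
case: ifP => ic; case: ifP => hij /=; rewrite ?mul0r ?mulr0 //.
rewrite -/(sqrtn R _) sqrtnM -(sqrtn_mul_self R #|B1 i|); ring.
Qed.

Lemma Amx_incid_entry c j d : B1 j \subset B2 d ->
  (Amx R a2 h23 *m incid_mx) c j = Amx R a2 h23 c d * (sqrtn R #|B1 j| / sqrtn R #|B2 d|).
Proof.
move=> jd; rewrite mxE (bigD1 d) //= big1 ?addr0; first by rewrite [incid_mx _ _]mxE jd.
move=> e ne; rewrite [incid_mx _ _]mxE; case: ifP => [je|_]; last by rewrite mulr0.
by rewrite (blk_sub_blk_uniq je jd) eqxx in ne.
Qed.

Lemma incid_mxA : incid_mx *m Amx R a1 h13 = Amx R a2 h23 *m incid_mx.
Proof.
apply/matrixP => c j; have /set0Pn[x xBj] := blk_neq0 j.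
have [d eq_d] := blk_onto a2 x.
have jd : B1 j \subset B2 d by rewrite (blk_sub_blk _ xBj) eq_d mem_component.
rewrite incid_Amx_entry (Amx_incid_entry c jd) mxE.
have [->|ne_cd] := eqVneq c d.
  by rewrite jd mul1r -natr_sum -natrD bdeg_blk_quot // mulrC.
have -> : (B1 j \subset B2 c) = false.
  by apply: contraNF ne_cd => jc; rewrite (blk_sub_blk_uniq jc jd).
rewrite mul0r add0r.
rewrite (eq_bigl (fun i => (B1 i \subset B2 c) && h23 (B2 c) (B2 d))); last first.
  by move=> i; case ic: (B1 i \subset B2 c); rewrite //= (quot_blk_compat ic jd ne_cd).
case: ifP => _; last by rewrite big_pred0 ?mulr0 ?mul0r // => i; rewrite andbF.
under eq_bigl do rewrite andbT.
rewrite -natr_sum sum_card_blk_sub -/(sqrtn R _) sqrtnM.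
have nz_c := sqrtn_neq0 R (card_blk_gt0 c); have nz_d := sqrtn_neq0 R (card_blk_gt0 d).
by rewrite -(sqrtn_mul_self R #|B2 c|); field; rewrite nz_c nz_d.
Qed.

End BlockIncidence.

Theorem mainTheorem9 (R : realType) (T : finType) (a1 a2 a3 : rel T) :
  simple_graph a1 -> simple_graph a2 -> simple_graph a3 ->
  regular_components a1 -> regular_components a2 ->
  divides a1 a2 -> divides a2 a3 ->
  divides a1 a3 /\
  (forall h13 h23 : rel {set T}, is_quot a1 a3 h13 -> is_quot a2 a3 h23 ->
     pdivides (phi R a2 h23) (phi R a1 h13)).
Proof.
move=> [sym1 _] [sym2 _] [sym3 _] reg1 reg2 div12 div23; split.
  exact: divides_trans sym1 sym2 sym3 div12 div23.
move=> h13 h23 q13 q23; have [h12 q12] := div12.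
rewrite /pdivides !phi_char_poly.
apply: (char_poly_dvd_intertwine (K := incid_mx R a1 a2)).
  exact: row_free_rinv (incid_mx_mulmx_tr R sym1 sym2 q12).
rewrite mulmxBr mulmxBl -!scalemxAr -!scalemxAl -!map_mxM.
rewrite (incid_mxA R sym1 sym2 reg1 reg2 q12 q13 q23).
by rewrite (incid_mxD R sym1 sym2 reg1 reg2 q12 q13 q23).
Qed.
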